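(* Let $\mathcal{B}$ be a prime Banach algebra over $\mathbb{R}$ or $\mathbb{C}$, and let $\mathcal{H}_1,\mathcal{H}_2$ be non-empty open subsets of $\mathcal{B}$. Suppose $\mathcal{B}$ admits a continuous automorphism $f$ such that for every $(x,y)\in\mathcal{H}_1\times\mathcal{H}_2$ there exist positive integers $p=p(x,y)$, $q=q(x,y)$ with $$f(x^{p}\circ y^{q})-[x^{p},y^{q}]\in Z(\mathcal{B}).$$ Then $\mathcal{B}$ is commutative.
   Context: $Z(\mathcal{B})$ denotes the center of $\mathcal{B}$. For $x,y\in\mathcal{B}$, $x\circ y=xy+yx$ and $[x,y]=xy-yx$. $\mathcal{B}$ is prime if $x\mathcal{B}y=\{0\}$ implies $x=0$ or $y=0$. An automorphism of $\mathcal{B}$ is a bijective map $f:\mathcal{B}\to\mathcal{B}$ with $f(x+y)=f(x)+f(y)$ and $f(xy)=f(x)f(y)$ for all $x,y$. *)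

From HB Require Import structures.
From mathcomp Require Import all_boot all_order all_algebra.
From mathcomp Require Import all_classical all_reals all_analysis.
Set Implicit Arguments. Unset Strict Implicit. Unset Printing Implicit Defensive.
Import Order.TTheory GRing.Theory Num.Theory.
Import numFieldNormedType.Exports.
Local Open Scope ring_scope.
Local Open Scope classical_set_scope.

Definition banach_algebra_mul {R : realType} {B : completeNormedModType R}
  (mul : B -> B -> B) : Prop :=
  (forall x y z, mul x (mul y z) = mul (mul x y) z) /\
  (forall x y z, mul x (y + z) = mul x y + mul x z) /\
  (forall x y z, mul (x + y) z = mul x z + mul y z) /\
  (forall (a : R) x y, mul (a *: x) y = a *: mul x y) /\
  (forall (a : R) x y, mul x (a *: y) = a *: mul x y) /\
  (forall x y, `|mul x y| <= `|x| * `|y|).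

(* x^n for n >= 1 (x^1 = x, x^(n+1) = x * x^n); only used with n >= 1. *)
Definition apow {B : Type} (mul : B -> B -> B) (x : B) (n : nat) : B :=
  iter n.-1 (mul x) x.

Definition alg_center {B : Type} (mul : B -> B -> B) : set B :=
  [set z | forall x, mul z x = mul x z].

Definition jordan_prod {B : zmodType} (mul : B -> B -> B) (x y : B) : B :=
  mul x y + mul y x.
Definition alg_commutator {B : zmodType} (mul : B -> B -> B) (x y : B) : B :=
  mul x y - mul y x.

Definition prime_alg {B : zmodType} (mul : B -> B -> B) : Prop :=
  forall x y, (forall b, mul (mul x b) y = 0) -> x = 0 \/ y = 0.

Definition alg_automorphism {B : zmodType} (mul : B -> B -> B) (f : B -> B) : Prop :=
  [/\ bijective f,
      (forall x y, f (x + y) = f x + f y)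
    & (forall x y, f (mul x y) = mul (f x) (f y))].

From HB Require Import structures.
From mathcomp Require Import all_boot all_order all_algebra.
From mathcomp Require Import all_classical all_reals all_analysis.
Set Implicit Arguments. Unset Strict Implicit. Unset Printing Implicit Defensive.
Import Order.TTheory GRing.Theory Num.Theory.
Import numFieldNormedType.Exports.
Local Open Scope ring_scope.
Local Open Scope classical_set_scope.

(* For fixed p, q the pairs (x, y) with f (x^p o y^q) - [x^p, y^q] central form a
   closed set, so the Baire category theorem, applied to each variable in turn,
   yields p, q that work on a neighbourhood.  The map y |-> f (a o y) - [a, y] is
   additive, hence Q-linear, and w^q is the top coefficient of (y0 + t w)^q in t;
   a Vandermonde argument with rational nodes t spreads centrality from the
   neighbourhood to all of B.  Evaluating at (u^q, v^p) and (v^q, u^p) separates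
   f (a o b) from [a, b], so u^k v^k is central for k = pq, and so is every x^(2k).
   In a prime algebra this forces commutativity: a nonzero central power a makes
   the linear coefficient (2k) a^(2k-1) r of (a + t r)^(2k) central for every r,
   and if all (2k)-th powers vanish then primeness forces B = 0. *)

Section VandermondeExtraction.
Variables (F : fieldType) (V : lmodType F) (S : set V).
Hypotheses (S0 : S 0) (SD : forall a b, S a -> S b -> S (a + b))
  (SZ : forall (c : F) a, S a -> S (c *: a)).

Lemma sum_mem (I : Type) (r : seq I) (P : pred I) (u : I -> V) :
  (forall i, P i -> S (u i)) -> S (\sum_(i <- r | P i) u i).
Proof. by move=> Su; apply: big_ind. Qed.

(* Inverting the Vandermonde matrix of the nodes t 0, ..., t n writes each
   coefficient as a linear combination of the values of the polynomial. *)
Lemma vandermonde_coef_mem n (c : nat -> V) (t : nat -> F) : injective t ->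
  (forall i, (i <= n)%N -> S (\sum_(j < n.+1) t i ^+ j *: c j)) ->
  forall j, (j <= n)%N -> S (c j).
Proof.
move=> t_inj Sval j le_jn.
pose M : 'M[F]_n.+1 := \matrix_(i, l) t i ^+ l.
have M_unit : M \in unitmx.
  have -> : M = (Vandermonde n.+1 (\row_l t l))^T by apply/matrixP => i l; rewrite !mxE.
  rewrite unitmxE det_tr det_Vandermonde unitfE.
  apply/prodf_neq0 => i _; apply/prodf_neq0 => l lt_il.
  rewrite !mxE subr_eq0; apply/eqP => /t_inj/val_inj eq_li.
  by rewrite eq_li ltnn in lt_il.
pose j0 := @Ordinal n.+1 j le_jn.
have -> : c j = \sum_(i < n.+1) invmx M j0 i *: \sum_(l < n.+1) t i ^+ l *: c l.
  rewrite (eq_bigr (fun i => \sum_(l < n.+1) (invmx M j0 i * t i ^+ l) *: c l));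
    last by move=> i _; rewrite scaler_sumr; apply: eq_bigr => l _; rewrite scalerA.
  rewrite exchange_big /= (eq_bigr (fun l => (invmx M *m M) j0 l *: c l)); last first.
    by move=> l _; rewrite mxE scaler_suml; apply: eq_bigr => i _; rewrite mxE.
  rewrite mulVmx // (bigD1 j0) //= big1 ?addr0; first by rewrite mxE eqxx scale1r.
  by move=> l /negPf ne_lj0; rewrite mxE eq_sym ne_lj0 scale0r.
by apply: sum_mem => i _; apply/SZ/Sval; rewrite -ltnS.
Qed.

End VandermondeExtraction.

Lemma baire_closed_cover (R : realType) (B : completeNormedModType R) (T : countType)
    (O : set B) (F : T -> set B) :
  open O -> O !=set0 -> (forall i, closed (F i)) -> O `<=` \bigcup_i F i ->
  exists i, (F i)° !=set0.
Proof.
move=> oO O_neq0 F_closed O_cover; apply: contrapT => no_interior.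
(* [~` F i] is only dense inside [O]; adding the exterior of [O] makes it dense. *)
pose G n := if unpickle n is Some i then ~` F i `|` (~` O)° else setT.
have G_open n : open (G n).
  rewrite /G; case: (unpickle n) => [i|]; last exact: openT.
  by apply: openU; [rewrite openC; exact: F_closed | exact: open_interior].
have G_dense n : dense (G n).
  rewrite /G; case: (unpickle n) => [i|]; last by move=> D [d Dd] _; exists d.
  move=> D [d Dd] oD; have [[y [Dy Oy]]|DO0] := pselect (D `&` O !=set0).
    have /existsNP [x /not_implyP [[Dx Ox] nFx]] : ~ (D `&` O `<=` F i).
      move=> DO_F; apply: no_interior; exists i, y; apply: filterS DO_F _.
      exact: open_nbhs_nbhs (conj (openI oD oO) (conj Dy Oy)).
    by exists x; split => //; left.
  exists d; split => //; right.
  by apply: filterS (open_nbhs_nbhs (conj oD Dd)) => z Dz Oz; apply: DO0; exists z.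
have [x [Ox Gx]] := Baire (fun n => conj (G_open n) (G_dense n)) O_neq0 oO.
have [i _ Fix] := O_cover x Ox.
by have := Gx (pickle i) I; rewrite /G pickleK => -[//|/interior_subset].
Qed.

Definition twist {V : zmodType} (mul : V -> V -> V) (f : V -> V) (a b : V) : V :=
  f (jordan_prod mul a b) - alg_commutator mul a b.

Section PrimeBanachAlgebra.
Variables (R : realType) (B : completeNormedModType R) (mul : B -> B -> B).
Hypothesis mulB : banach_algebra_mul mul.
Local Notation "x ^^ n" := (apow mul x n) (at level 30).
Local Notation Z := (alg_center mul).

Lemma bmulA x y z : mul x (mul y z) = mul (mul x y) z.
Proof. by case: mulB. Qed.
Lemma bmulDr x y z : mul x (y + z) = mul x y + mul x z.
Proof. by case: mulB => _ []. Qed.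
Lemma bmulDl x y z : mul (x + y) z = mul x z + mul y z.
Proof. by case: mulB => _ [] _ []. Qed.
Lemma bmulZl (a : R) x y : mul (a *: x) y = a *: mul x y.
Proof. by case: mulB => _ [] _ [] _ []. Qed.
Lemma bmulZr (a : R) x y : mul x (a *: y) = a *: mul x y.
Proof. by case: mulB => _ [] _ [] _ [] _ []. Qed.
Lemma bmul_norm x y : `|mul x y| <= `|x| * `|y|.
Proof. by case: mulB => _ [] _ [] _ [] _ []. Qed.

Lemma bmul0r x : mul 0 x = 0.
Proof. by apply: (addrI (mul 0 x)); rewrite addr0 -bmulDl addr0. Qed.
Lemma bmulr0 x : mul x 0 = 0.
Proof. by apply: (addrI (mul x 0)); rewrite addr0 -bmulDr addr0. Qed.
Lemma bmulNr x y : mul (- x) y = - mul x y.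
Proof. by apply/eqP; rewrite -addr_eq0 -bmulDl addNr bmul0r. Qed.
Lemma bmulrN x y : mul x (- y) = - mul x y.
Proof. by apply/eqP; rewrite -addr_eq0 -bmulDr addNr bmulr0. Qed.
Lemma bmulBr x y z : mul x (y - z) = mul x y - mul x z.
Proof. by rewrite bmulDr bmulrN. Qed.
Lemma bmulBl x y z : mul (x - y) z = mul x z - mul y z.
Proof. by rewrite bmulDl bmulNr. Qed.
Lemma bmul_sumr (I : Type) (r : seq I) (P : pred I) (u : I -> B) x :
  mul x (\sum_(i <- r | P i) u i) = \sum_(i <- r | P i) mul x (u i).
Proof. exact: (big_morph (mul x) (bmulDr x) (bmulr0 x)). Qed.

Lemma apowS x n : x ^^ n.+2 = mul x (x ^^ n.+1).
Proof. by []. Qed.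
Lemma apowSr x n : x ^^ n.+2 = mul (x ^^ n.+1) x.
Proof. by elim: n => [//|n IHn]; rewrite [LHS]apowS [in LHS]IHn bmulA. Qed.
Lemma apowD x m n : (0 < m)%N -> (0 < n)%N -> x ^^ (m + n) = mul (x ^^ m) (x ^^ n).
Proof.
case: m => // m _; case: n => // n _.
by elim: m => [|m IHm]; rewrite ?add1n // -[in RHS]bmulA -IHm.
Qed.
Lemma apowM x p q : (0 < p)%N -> (0 < q)%N -> (x ^^ q) ^^ p = x ^^ (q * p).
Proof.
case: p => // p _ q_gt0; elim: p => [|p IHp]; first by rewrite muln1.
by rewrite apowS IHp -apowD ?muln_gt0 ?q_gt0 // [in RHS]mulnS.
Qed.

Lemma center0 : Z 0.
Proof. by move=> x; rewrite bmul0r bmulr0. Qed.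
Lemma centerD a b : Z a -> Z b -> Z (a + b).
Proof. by move=> Za Zb x; rewrite bmulDl bmulDr Za Zb. Qed.
Lemma centerN a : Z a -> Z (- a).
Proof. by move=> Za x; rewrite bmulNr bmulrN Za. Qed.
Lemma centerZ (c : R) a : Z a -> Z (c *: a).
Proof. by move=> Za x; rewrite bmulZl bmulZr Za. Qed.
Lemma centerM a b : Z a -> Z b -> Z (mul a b).
Proof. by move=> Za Zb x; rewrite -bmulA Zb bmulA Za bmulA. Qed.
Lemma center_apow a n : Z a -> Z (a ^^ n).
Proof.
by move=> Za; case: n => [//|n]; elim: n => [//|n IHn]; rewrite apowS; apply: centerM.
Qed.

Lemma center_double a : Z (a + a) -> Z a.
Proof.
have two_neq0 : 2 != 0 :> R by rewrite pnatr_eq0.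
by rewrite -mulr2n -scaler_nat => /(centerZ 2^-1); rewrite scalerK.
Qed.

Lemma center_addB a b : Z (a + b) -> Z (a - b) -> Z a.
Proof.
move=> Zab Zamb; apply: center_double.
rewrite (_ : a + a = (a + b) + (a - b)); first exact: centerD.
by rewrite addrACA subrr addr0.
Qed.

(* [pow_coef x z n j] is the coefficient of [t ^+ j] in [(x + t *: z) ^^ n.+1]. *)
Fixpoint pow_coef (x z : B) (n j : nat) : B :=
  match n with
  | 0 => if j == 0 then x else if j == 1 then z else 0
  | n.+1 => mul x (pow_coef x z n j) + (if j is j.+1 then mul z (pow_coef x z n j) else 0)
  end.

Lemma pow_coef_gt x z n j : (n.+1 < j)%N -> pow_coef x z n j = 0.
Proof.
elim: n j => [|n IHn] [|[|j]] //= lt_nj.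
by rewrite !IHn 1?(ltn_trans _ lt_nj) // !bmulr0 addr0.
Qed.

Lemma pow_coefS x z n j :
  pow_coef x z n.+1 j.+1 = mul x (pow_coef x z n j.+1) + mul z (pow_coef x z n j).
Proof. by []. Qed.

Lemma pow_coef0 x z n : pow_coef x z n 0 = x ^^ n.+1.
Proof. by elim: n => [//|n /= ->]; rewrite addr0. Qed.

Lemma pow_coef_top x z n : pow_coef x z n n.+1 = z ^^ n.+1.
Proof. by elim: n => [//|n /= ->]; rewrite pow_coef_gt // bmulr0 add0r. Qed.

Lemma apow_pencil x z (t : R) n :
  (x + t *: z) ^^ n.+1 = \sum_(j < n.+2) t ^+ j *: pow_coef x z n j.
Proof.
elim: n => [|n IHn].
  by rewrite !big_ord_recr big_ord0 /= expr0 expr1 scale1r add0r.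
rewrite apowS IHn bmulDl !bmul_sumr /=.
under [in RHS]eq_bigr do rewrite scalerDr.
rewrite big_split /=; congr (_ + _).
  rewrite [in RHS]big_ord_recr /= pow_coef_gt // bmulr0 scaler0 addr0.
  by apply: eq_bigr => j _; rewrite bmulZr.
rewrite [in RHS]big_ord_recl /= scaler0 add0r.
by apply: eq_bigr => j _; rewrite bmulZl bmulZr scalerA -exprS.
Qed.

Lemma pow_coef1_center x z n : Z x -> pow_coef x z n.+1 1 = n.+2%:R *: mul (x ^^ n.+1) z.
Proof.
move=> Zx; elim: n => [|n IHn]; first by rewrite /= (Zx z) scaler_nat mulr2n.
rewrite pow_coefS IHn pow_coef0 bmulZr bmulA -apowS -(center_apow n.+2 Zx z).
by rewrite -[n.+3]addn1 natrD [in RHS]scalerDl scale1r.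
Qed.

Lemma pow_coef1_nil x z m n : x ^^ m.+2 = 0 ->
  mul (x ^^ m.+1) (pow_coef x z n.+1 1) = mul (mul (x ^^ m.+1) z) (x ^^ n.+1).
Proof.
move=> xm0; rewrite pow_coefS pow_coef0 bmulDr !bmulA -apowSr xm0.
by rewrite bmul0r add0r.
Qed.

Lemma bmul_cvg0 (T : Type) (F : set_system T) {FF : Filter F} (u v : T -> B) :
  `|u t| * `|v t| @[t --> F] --> (0 : R) -> mul (u t) (v t) @[t --> F] --> 0.
Proof.
move=> uv0; apply: norm_cvg0; apply: (squeeze_cvgr _ (cvg_cst 0) uv0).
by near=> t; rewrite normr_ge0 bmul_norm.
Unshelve. all: by end_near. Qed.

Lemma bmul_continuous (T : topologicalType) (g h : T -> B) :
  continuous g -> continuous h -> continuous (fun t => mul (g t) (h t)).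
Proof.
move=> g_cont h_cont t0; apply/subr_cvg0.
have g_dist0 : `|g t - g t0| @[t --> t0] --> (0 : R).
  by have /subr_cvg0/cvg_norm := g_cont t0; rewrite normr0.
have h_dist0 : `|h t - h t0| @[t --> t0] --> (0 : R).
  by have /subr_cvg0/cvg_norm := h_cont t0; rewrite normr0.
rewrite (_ : (fun t => _) = (fun t => mul (g t - g t0) (h t) + mul (g t0) (h t - h t0))).
  rewrite -[0]addr0; apply: cvgD; apply: bmul_cvg0.
    by rewrite -(mul0r `|h t0|); apply: cvgM => //; apply: cvg_norm; exact: h_cont.
  by rewrite -(mulr0 `|g t0|); apply: cvgM => //; exact: cvg_cst.
by apply/funext => t; rewrite bmulBl bmulBr addrA subrK.
Qed.

Lemma apow_continuous n : continuous (fun x : B => x ^^ n).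
Proof.
case: n => [|n]; first by move=> x; exact: cvg_id.
elim: n => [|n IHn]; first by move=> x; exact: cvg_id.
by apply: bmul_continuous => // x; exact: cvg_id.
Qed.

Lemma closed_center_preimage (T : topologicalType) (phi : T -> B) :
  continuous phi -> closed [set t | Z (phi t)].
Proof.
move=> phi_cont.
rewrite (_ : [set t | Z (phi t)] =
    \bigcap_s ((fun t => mul (phi t) s - mul s (phi t)) @^-1` [set 0])).
  apply: closed_bigI => s _; apply: preimage_closed.
    by move=> t _; apply: continuousB; apply: bmul_continuous => //; exact: cst_continuous.
  exact/accessible_closed_set1/hausdorff_accessible/norm_hausdorff.
apply/seteqP; split => t /=; first by move=> Zt s _; rewrite /= Zt subrr.
by move=> Zt s; apply/eqP; rewrite -subr_eq0; apply/eqP/Zt.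
Qed.

Lemma additive_scale_natr (g : B -> B) : {morph g : a b / a + b} ->
  forall n v, g (n%:R *: v) = n%:R *: g v.
Proof.
move=> gD n v; rewrite !scaler_nat; elim: n => [|n IHn].
  by apply: (addrI (g 0)); rewrite -gD !addr0.
by rewrite !mulrS gD IHn.
Qed.

Lemma additive_scale_invnatr (g : B -> B) : {morph g : a b / a + b} ->
  forall n v, (0 < n)%N -> g (n%:R^-1 *: v) = n%:R^-1 *: g v.
Proof.
move=> gD n v n_gt0; have n_neq0 : n%:R != 0 :> R by rewrite pnatr_eq0 -lt0n.
by rewrite -{2}(scalerKV n_neq0 v) additive_scale_natr // scalerK.
Qed.

(* Additivity only gives homogeneity for rational scalars, so the nodes of the
   Vandermonde argument are the points [y0 + (i + K)^-1 *: w]. *)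
Lemma center_apow_global (g : B -> B) n (y0 : B) : {morph g : a b / a + b} ->
  (\forall y \near y0, Z (g (y ^^ n.+1))) -> forall w, Z (g (w ^^ n.+1)).
Proof.
move=> gD /nbhs_ballP [e e_gt0 Zball] w.
pose K := (Num.truncn (`|w| / e)).+1.
have w_lt : `|w| < K%:R * e by rewrite -ltr_pdivrMr // truncnS_gt.
pose t i := ((i + K)%:R : R)^-1.
have iK_gt0 i : (0 < i + K)%N by rewrite addnS.
have t_inj : injective t.
  by move=> i j /invr_inj/eqP; rewrite eqr_nat eqn_add2r => /eqP.
have g0 : g 0 = 0 by apply: (addrI (g 0)); rewrite -gD !addr0.
rewrite -(pow_coef_top y0).
apply: (vandermonde_coef_mem center0 centerD centerZ (n := n.+1)
  (c := fun j => g (pow_coef y0 w n j)) t_inj) => // i _.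
rewrite (eq_bigr (fun j : 'I_n.+2 => g (t i ^+ j *: pow_coef y0 w n j))); last first.
  by move=> j _; rewrite /t exprVn -natrX additive_scale_invnatr // expn_gt0 iK_gt0.
rewrite -(big_morph g gD g0) -apow_pencil; apply: Zball.
rewrite -ball_normE /= opprD addNKr normrN normrZ ger0_norm ?invr_ge0 //.
rewrite mulrC ltr_pdivrMr ?ltr0n // (lt_le_trans w_lt) //.
by rewrite mulrC ler_pM2l // ler_nat leq_addl.
Qed.

Hypothesis prime_mul : prime_alg mul.

Lemma prime_mul_center_eq0 a w : Z w -> mul a w = 0 -> a = 0 \/ w = 0.
Proof. by move=> Zw aw0; apply: prime_mul => b; rewrite -bmulA -(Zw b) bmulA aw0 bmul0r. Qed.

Lemma center_apow_neq0 a n : Z a -> a != 0 -> a ^^ n.+1 != 0.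
Proof.
move=> Za a_neq0; elim: n => [//|n IHn]; apply/eqP; rewrite apowS.
by case/(prime_mul_center_eq0 (center_apow _ Za)) => /eqP; rewrite ?(negPf a_neq0) ?(negPf IHn).
Qed.

Lemma commutative_of_center_lmul d : Z d -> d != 0 -> (forall r, Z (mul d r)) ->
  forall x y, mul x y = mul y x.
Proof.
move=> Zd d_neq0 Zdr x y.
have dxy : mul d (mul x y) = mul d (mul y x) by rewrite bmulA (Zdr x y) bmulA -(Zd y) -bmulA.
have [b|d0|/eqP] := prime_mul (x := d) (y := mul x y - mul y x).
- by rewrite (Zd b) -bmulA bmulBr dxy subrr bmulr0.
- by rewrite d0 eqxx in d_neq0.
- by rewrite subr_eq0 => /eqP.
Qed.

Lemma apow_nil_eq0 n : (forall x, x ^^ n.+1 = 0) -> forall x : B, x = 0.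
Proof.
elim: n => [//|m IHm] nil_m; apply: IHm => x.
suff xzx z : mul (mul (x ^^ m.+1) z) (x ^^ m.+1) = 0 by case: (prime_mul xzx).
have coef1_eq0 : pow_coef x z m.+1 1 = 0.
  apply: (vandermonde_coef_mem (S := [set v : B | v = 0]) _ _ _ (n := m.+2)
    (c := pow_coef x z m.+1) (mulrIn (oner_neq0 R))) => //.
  - by move=> a b /= -> ->; rewrite addr0.
  - by move=> c a /= ->; rewrite scaler0.
  - by move=> i _; rewrite /= -apow_pencil nil_m.
by rewrite -(pow_coef1_nil z m (nil_m x)) coef1_eq0 bmulr0.
Qed.

Lemma commutative_of_center_apow_neq0 n u : (forall x, Z (x ^^ n.+2)) -> u ^^ n.+2 != 0 ->
  forall x y, mul x y = mul y x.
Proof.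
move=> Zpow u_neq0; set a := u ^^ n.+2; have Za : Z a := Zpow u.
apply: (commutative_of_center_lmul (center_apow _ Za) (center_apow_neq0 n Za u_neq0)) => r.
have Zcoef1 : Z (pow_coef a r n.+1 1).
  apply: (vandermonde_coef_mem center0 centerD centerZ (n := n.+2)
    (c := pow_coef a r n.+1) (mulrIn (oner_neq0 R))) => // i _.
  by rewrite -apow_pencil; apply: Zpow.
rewrite pow_coef1_center // in Zcoef1.
have n2_neq0 : n.+2%:R != 0 :> R by rewrite pnatr_eq0.
by rewrite -(scalerK n2_neq0 (mul (a ^^ n.+1) r)); apply: centerZ.
Qed.

Lemma commutative_of_center_apow n : (0 < n)%N -> (forall x, Z (x ^^ n)) ->
  forall x y, mul x y = mul y x.
Proof.
case: n => [//|[_ Zx x y|n _ Zpow]]; first exact: Zx.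
have [[u u_neq0]|all_eq0] := pselect (exists u, u ^^ n.+2 != 0).
  exact: commutative_of_center_apow_neq0 Zpow u_neq0.
have nil x : x ^^ n.+2 = 0 by apply: contra_notP all_eq0 => /eqP; exists x.
by move=> x y; rewrite (apow_nil_eq0 nil x) (apow_nil_eq0 nil y).
Qed.

Variable f : B -> B.
Hypotheses (f_aut : alg_automorphism mul f) (f_cont : continuous f).
Local Notation twist := (twist mul f).

Lemma center_automorphism_inv w : Z (f w) -> Z w.
Proof. by case: f_aut => /bij_inj f_inj _ fM Zfw x; apply: f_inj; rewrite !fM Zfw. Qed.

Lemma jordan_prodDr a : {morph jordan_prod mul a : b c / b + c}.
Proof. by move=> b c; rewrite /jordan_prod bmulDr bmulDl addrACA. Qed.
Lemma jordan_prodDl b : {morph jordan_prod mul^~ b : a c / a + c}.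
Proof. by move=> a c; rewrite /jordan_prod bmulDr bmulDl addrACA. Qed.
Lemma alg_commutatorDr a : {morph alg_commutator mul a : b c / b + c}.
Proof. by move=> b c; rewrite /alg_commutator bmulDr bmulDl opprD addrACA. Qed.
Lemma alg_commutatorDl b : {morph alg_commutator mul^~ b : a c / a + c}.
Proof. by move=> a c; rewrite /alg_commutator bmulDr bmulDl opprD addrACA. Qed.

Lemma twistDr a : {morph twist a : b c / b + c}.
Proof.
case: f_aut => _ fD _ b c.
by rewrite /twist jordan_prodDr alg_commutatorDr fD opprD addrACA.
Qed.

Lemma twistDl b : {morph twist^~ b : a c / a + c}.
Proof.
case: f_aut => _ fD _ a c.
by rewrite /twist jordan_prodDl alg_commutatorDl fD opprD addrACA.
Qed.

Lemma twist_continuous (T : topologicalType) (u v : T -> B) :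
  continuous u -> continuous v -> continuous (fun t => twist (u t) (v t)).
Proof.
move=> u_cont v_cont t.
have uv_cont := bmul_continuous u_cont v_cont; have vu_cont := bmul_continuous v_cont u_cont.
have J_cont : continuous (fun t => jordan_prod mul (u t) (v t)).
  by move=> s; exact: continuousD (uv_cont s) (vu_cont s).
rewrite /twist; apply: (@continuousB _ _ _ (fun s => f (jordan_prod mul (u s) (v s)))
  (fun s => alg_commutator mul (u s) (v s))).
  apply: (@continuous_comp _ _ _ (fun s => jordan_prod mul (u s) (v s)) f).
    exact: J_cont.
  exact: f_cont.
apply: (@continuousB _ _ _ (fun s => mul (u s) (v s)) (fun s => mul (v s) (u s))).
  exact: uv_cont.
exact: vu_cont.
Qed.

Lemma center_of_twist a b : Z (twist a b) -> Z (twist b a) -> Z (mul a b).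
Proof.
rewrite /twist /jordan_prod /alg_commutator [mul b a + _]addrC -(opprB (mul a b)) opprK.
set S := mul a b + mul b a; set C := mul a b - mul b a => ZSmC ZSpC.
have ZC : Z C.
  apply: (center_addB (b := f S)); first by rewrite addrC.
  by rewrite -opprB; apply: centerN.
exact/(center_addB _ ZC)/center_automorphism_inv/(center_addB ZSpC).
Qed.

Variables (H1 H2 : set B).
Hypotheses (H1_open : open H1) (H1_neq0 : H1 !=set0).
Hypotheses (H2_open : open H2) (H2_neq0 : H2 !=set0).
Hypothesis twist_pow : forall x y, H1 x -> H2 y ->
  exists p q : nat, (0 < p)%N /\ (0 < q)%N /\ Z (twist (x ^^ p) (y ^^ q)).

Lemma twist_pow_right x : H1 x -> exists p q, forall w, Z (twist (x ^^ p.+1) (w ^^ q.+1)).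
Proof.
move=> H1x; pose F (i : nat * nat) := [set y | Z (twist (x ^^ i.1.+1) (y ^^ i.2.+1))].
have [[p q] [y0 Fy0]] : exists i, (F i)° !=set0.
  apply: baire_closed_cover H2_open H2_neq0 _ _ => [i|y H2y].
    apply/closed_center_preimage/twist_continuous; first exact: cst_continuous.
    exact: apow_continuous.
  have [p [q [p_gt0 [q_gt0 Zt]]]] := twist_pow H1x H2y.
  by exists (p.-1, q.-1); rewrite //= !prednK.
by exists p, q; apply: (center_apow_global (g := twist (x ^^ p.+1)) (twistDr _) Fy0).
Qed.

Lemma twist_pow_uniform : exists p q, forall z w, Z (twist (z ^^ p.+1) (w ^^ q.+1)).
Proof.
pose F (i : nat * nat) := [set x | forall w, Z (twist (x ^^ i.1.+1) (w ^^ i.2.+1))].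
have [[p q] [x0 Fx0]] : exists i, (F i)° !=set0.
  apply: baire_closed_cover H1_open H1_neq0 _ _ => [i|x /twist_pow_right [p [q Fx]]]; last first.
    by exists (p, q).
  rewrite (_ : F i = \bigcap_w [set x | Z (twist (x ^^ i.1.+1) (w ^^ i.2.+1))]).
    apply: closed_bigI => w _; apply/closed_center_preimage/twist_continuous.
      exact: apow_continuous.
    exact: cst_continuous.
  by apply/seteqP; split => x /= Fx w => [_|]; apply: Fx.
exists p, q => z w; apply: (center_apow_global (g := twist^~ (w ^^ q.+1)) (twistDl _)).
by apply: filterS Fx0 => x; apply.
Qed.

End PrimeBanachAlgebra.

Theorem theorem2p4 (R : realType) (B : completeNormedModType R)
  (mul : B -> B -> B) (H1 H2 : set B) (f : B -> B) :
  banach_algebra_mul mul ->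
  prime_alg mul ->
  open H1 -> H1 !=set0 ->
  open H2 -> H2 !=set0 ->
  alg_automorphism mul f ->
  continuous f ->
  (forall x y, H1 x -> H2 y ->
     exists p q : nat, (0 < p)%N /\ (0 < q)%N /\
       alg_center mul ((f (jordan_prod mul (apow mul x p) (apow mul y q))
                   - alg_commutator mul (apow mul x p) (apow mul y q)) : B)) ->
  forall x y : B, mul x y = mul y x.
Proof.
move=> mulB prime_mul H1_open H1_neq0 H2_open H2_neq0 f_aut f_cont twist_pow.
have [p [q Ztwist]] :=
  twist_pow_uniform mulB f_aut f_cont H1_open H1_neq0 H2_open H2_neq0 twist_pow.
pose k := (p.+1 * q.+1)%N; have k_gt0 : (0 < k)%N by rewrite muln_gt0.
have Zpow_mul u v : alg_center mul (mul (apow mul u k) (apow mul v k)).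
  apply: (center_of_twist mulB f_aut).
    by have := Ztwist (apow mul u q.+1) (apow mul v p.+1); rewrite !(apowM mulB) // mulnC.
  by have := Ztwist (apow mul v q.+1) (apow mul u p.+1); rewrite !(apowM mulB) // mulnC.
apply: (commutative_of_center_apow mulB prime_mul (n := k + k)); first by rewrite addn_gt0 k_gt0.
by move=> x; rewrite (apowD mulB) //; exact: Zpow_mul.
Qed.
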